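(* Let $m,n\ge0$. The elements $R(I,J)$ with $(I,J)\in X^{\pm}(m,n)$ span the ring $U^{\pm}_{m,n}$ as a $\mathbb Z$-module.
   Context: $U^{\pm}_{m,n}$ is the commutative ring generated over $\mathbb Z$ by $u_1,u_2,\dots$, $v_1,v_2,\dots$ and $t$ (with $u_0=v_0=1$, $u_i=v_i=0$ for $i<0$) subject to $R_I(w)=0$ for all $I\in\mathbb Z^{m+1}$, where $w_i=u_i-tv_{-i-m+n}$ and, for $I=(i_1,\dots,i_p)\in\mathbb Z^p$, $R_I(w)=\det(w_{i_\alpha+\beta-1})_{1\le\alpha,\beta\le p}$ ($R_\emptyset=1$); write $|I|=p$. In $U^{\pm}_{m,n}$ the element $t$ is invertible. For $I\in\mathbb Z^p$ and $J=(j_1,\dots,j_q)$ integers with $j_1,\dots,j_{q-1}\ge0$ and $j_q$ arbitrary, $R(I,J)=R_I(w)u_1^{j_1}\cdots u_{q-1}^{j_{q-1}}t^{j_q}$. $X^{\pm}(m,n)$ is the set of such pairs $(I,J)$ with $I$ strictly decreasing, $|I|\le m$, $|J|\le n$, $|I|-|J|=m-n$. *)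

From HB Require Import structures.
From mathcomp Require Import all_boot all_order all_algebra.
Set Implicit Arguments. Unset Strict Implicit. Unset Printing Implicit Defensive.
Import Order.TTheory GRing.Theory Num.Theory.
Local Open Scope ring_scope.

Section UDefs.
Variable A : comUnitRingType.

(* Extension of a generator family g (g k = the generator x_k for k >= 1;
   g 0 is never used) to all integer indices: x_0 = 1, x_i = 0 for i < 0. *)
Definition ext (g : nat -> A) (i : int) : A :=
  match i with
  | Posz k => if k == 0%N then 1 else g k
  | Negz _ => 0
  end.

Definition wseq (m n : nat) (u v : nat -> A) (t : A) (i : int) : A :=
  ext u i - t * ext v (- i - m%:Z + n%:Z).

(* R_I(w) = det (w_{i_alpha + beta - 1})_{1 <= alpha, beta <= p}, p = |I|;
   with 0-based alpha, beta this is w_{i_alpha + beta}. R_[::] = 1. *)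
Definition RI (w : int -> A) (I : seq int) : A :=
  \det (\matrix_(a < size I, b < size I) w (nth 0 I a + b%:Z)).

Definition RIJ (m n : nat) (u v : nat -> A) (t : A) (I J : seq int) : A :=
  RI (wseq m n u v t) I
  * (\prod_(k < (size J).-1) (u k.+1) ^ (nth 0 J k))
  * (if J is [::] then 1 else t ^ (last 0 J)).

End UDefs.

Definition admissibleJ (J : seq int) : Prop :=
  forall k : nat, (k < (size J).-1)%N -> 0 <= nth 0 J k.

Definition inX (m n : nat) (I J : seq int) : Prop :=
  [/\ sorted (fun a b : int => b < a) I, (size I <= m)%N, (size J <= n)%N,
      admissibleJ J & (size I)%:Z - (size J)%:Z = m%:Z - n%:Z].

Definition generated_by (A : comUnitRingType) (u v : nat -> A) (t : A) : Prop :=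
  forall S : A -> Prop,
    S 1 -> (forall a b, S a -> S b -> S (a - b)) ->
    (forall a b, S a -> S b -> S (a * b)) ->
    (forall k, (0 < k)%N -> S (u k)) -> (forall k, (0 < k)%N -> S (v k)) ->
    S t -> S t^-1 -> forall x, S x.

(* Let M be the Z-span of the R(I,J), (I,J) in X(m,n).  As 1 lies in M and
   the ring is generated by the u_k, v_k, t and t^-1, it is enough to show that
   M is stable under multiplication by these generators, and it suffices to
   check this on the products D(r) * mon, where D(r) = det (w_(r_a + j)) has
   p <= m rows and mon is a monomial in u_1, ..., u_(q-1), t^(+-1) with
   p - q = m - n.  Such a product with p <= m + 1 rows lies in M: sorting the
   rows gives 0 or +-R(I,J), and R_I = 0 when |I| = m + 1.

   Multiplying by u_k (k < q), t or t^-1 only changes the monomial, except for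
   q = 0, where the expansion of D(r) extended by the row n - m trades t for
   determinants with p and p + 1 rows.  For w_x, expanding the determinant of
   r extended by one row along that row gives column-shifted minors, and the exchange identity
     sum_(|e| = k) D(r + e, c) = sum_(|e| = k) D(r, c + e)
   turns them into row-shifted determinants; this expresses w_x D(r) through
   terms w_y D(r') with y closer to a window of p consecutive indices, on which
   w_x = u_x - t v_(n-m-x) already acts as a monomial.  Finally u_k and v_k are
   recovered from w, t and t^-1. *)

From HB Require Import structures.
From mathcomp Require Import all_boot all_order all_algebra perm.
From mathcomp Require Import ring zify.
Set Implicit Arguments. Unset Strict Implicit. Unset Printing Implicit Defensive.
Import Order.TTheory GRing.Theory Num.Theory.
Local Open Scope ring_scope.

Lemma card_ord_ge p c : #|[set i : 'I_p | c <= i]%N| = (p - c)%N.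
Proof.
rewrite -sum1dep_card -(big_mkord (leq c) (fun _ => 1%N)) big_mkcond /=.
elim: p => [|p IH]; first by rewrite big_geq.
by rewrite big_nat_recr //= IH; case: leqP; lia.
Qed.

Lemma upclosed_of_succ p (e : {set 'I_p}) :
  (forall l l' : 'I_p, l' = l.+1 :> nat -> l \in e -> l' \in e) ->
  forall i j : 'I_p, (i <= j)%N -> i \in e -> j \in e.
Proof.
move=> step i j; move: {2}(j : nat) (erefl (j : nat)) => k.
elim: k j => [|k IH] j jk ij ei.
  suff -> : j = i by [].
  by apply: ord_inj; lia.
case: (ltngtP i j) ij => // [ij _ | /ord_inj <- //].
have kp : (k < p)%N by have := ltn_ord j; lia.
by apply: (step (Ordinal kp)) => //; apply: IH => //=; lia.
Qed.

Lemma upclosed_ord_set p (e : {set 'I_p}) :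
  (forall i j : 'I_p, (i <= j)%N -> i \in e -> j \in e) ->
  e = [set j : 'I_p | p - #|e| <= j]%N.
Proof.
move=> up; apply/setP => j; rewrite inE; have jp := ltn_ord j.
apply/idP/idP => [ej | ].
  have : [set i : 'I_p | j <= i]%N \subset e.
    by apply/subsetP => i; rewrite inE => /up; apply.
  move/subset_leq_card; rewrite card_ord_ge; move: #|e| => c; lia.
apply: contraLR => ej.
have : e \subset [set i : 'I_p | j < i]%N.
  apply/subsetP => i ei; rewrite inE ltnNge; apply: contra ej => ij.
  exact: up ij ei.
by move/subset_leq_card; rewrite card_ord_ge; lia.
Qed.

Section ShiftedDeterminants.
Variables (R : comUnitRingType) (w : int -> R).

Definition detw p (rf cf : 'I_p -> int) : R :=
  \det (\matrix_(a < p, j < p) w (rf a + cf j)).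

Definition ordz p : 'I_p -> int := fun j => (j : nat)%:Z.

Definition shift p (f : 'I_p -> int) (e : {set 'I_p}) : 'I_p -> int :=
  fun i => f i + ((i \in e) : nat)%:Z.

Definition rcons_row p (rf : 'I_p -> int) (r : int) : 'I_p.+1 -> int :=
  fun a => if unlift ord_max a is Some a' then rf a' else r.

Definition cols_skip p (b : nat) : 'I_p -> int := fun j => (bump b j : nat)%:Z.

Local Notation D rf := (detw rf (@ordz _)).

Lemma RI_detw p (s : seq int) : size s = p -> RI w s = D (fun a : 'I_p => nth 0 s a).
Proof. by move<-. Qed.

Lemma eq_detw p (rf1 cf1 rf2 cf2 : 'I_p -> int) :
  (forall a j, rf1 a + cf1 j = rf2 a + cf2 j) -> detw rf1 cf1 = detw rf2 cf2.
Proof. by move=> E; congr (\det _); apply/matrixP=> a j; rewrite !mxE E. Qed.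

Lemma detw_perm p (s : 'S_p) rf cf :
  detw (rf \o s) cf = (-1) ^+ s * detw rf cf.
Proof.
rewrite /detw -det_perm -det_mulmx -row_permE; congr (\det _).
by apply/matrixP=> a j; rewrite !mxE.
Qed.

Lemma detw_row_eq0 p rf cf (a1 a2 : 'I_p) :
  a1 != a2 -> rf a1 = rf a2 -> detw rf cf = 0.
Proof. by move=> ne E; apply: (determinant_alternate ne) => j; rewrite !mxE E. Qed.

Lemma detw_col_eq0 p rf cf (j1 j2 : 'I_p) :
  j1 != j2 -> cf j1 = cf j2 -> detw rf cf = 0.
Proof.
by move=> ne E; rewrite /detw -det_tr; apply: (determinant_alternate ne) => a; rewrite !mxE E.
Qed.

Lemma detw0 (rf cf : 'I_0 -> int) : detw rf cf = 1.
Proof. exact: det_mx00. Qed.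

Lemma detw_sort_rows p (rf : 'I_p -> int) :
  D rf = 0 \/ exists s : seq int,
    [/\ sorted (fun a b => b < a) s, size s = p & exists k : nat, D rf = (-1) ^+ k * RI w s].
Proof.
pose l := [seq rf i | i <- enum 'I_p].
have size_l : size l = p by rewrite size_map size_enum_ord.
have nth_l (i : 'I_p) : nth 0 l i = rf i by rewrite (nth_map i) ?size_enum_ord // nth_ord_enum.
have [uniq_l | /(uniqPn 0) [i [j [ij jl Eij]]]] := boolP (uniq l); last first.
  rewrite size_l in jl; left.
  apply: (@detw_row_eq0 _ _ _ (Ordinal (ltn_trans ij jl)) (Ordinal jl)).
    by rewrite -(inj_eq val_inj) /= neq_ltn ij.
  by rewrite -!nth_l.
right; exists (rev (sort <=%O l)); split.
- by rewrite rev_sorted; have := sort_lt_sorted l; rewrite uniq_l.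
- by rewrite size_rev size_sort size_l.
have : perm_eq (rev (sort <=%O l)) [tuple rf i | i < p] by rewrite perm_rev perm_sort.
case/tuple_permP => sg Hs; exists (odd_perm sg).
rewrite (@RI_detw p) ?Hs ?size_tuple //.
rewrite [X in _ = _ * X](@eq_detw p _ _ (rf \o sg) (@ordz p)); last first.
  by move=> a j; rewrite -tnth_nth !tnth_mktuple.
by rewrite detw_perm mulrA -expr2 sqrr_sign mul1r.
Qed.

Lemma sum_detw_shift_exchange p rf cf k :
  \sum_(e : {set 'I_p} | #|e| == k) detw (shift rf e) cf =
  \sum_(e : {set 'I_p} | #|e| == k) detw rf (shift cf e).
Proof.
rewrite /detw /determinant exchange_big [RHS]exchange_big; apply: eq_bigr => s _ /=.
rewrite -!big_distrr /=; congr (_ * _).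
rewrite [RHS](reindex_inj (imset_inj (@perm_inj _ s))) /=.
apply: eq_big => [e|e _]; first by rewrite card_imset //; apply: perm_inj.
apply: eq_bigr => i _; rewrite !mxE /shift mem_imset; last exact: perm_inj.
by congr (w _); ring.
Qed.

Lemma sum_detw_shift_cols p rf k : (k <= p)%N ->
  \sum_(e : {set 'I_p} | #|e| == k) detw rf (shift (@ordz p) e) =
  detw rf (cols_skip (p - k)%N).
Proof.
move=> kp; pose e0 := [set j : 'I_p | p - k <= j]%N.
have ce0 : #|e0| = k by rewrite card_ord_ge; lia.
rewrite (bigD1 e0) ?ce0 //= big1 ?addr0.
  by apply: eq_detw => a j; rewrite /shift /ordz /cols_skip inE /bump -PoszD addnC.
move=> e /andP [/eqP ce ne0].
case: (boolP [exists l : 'I_p, exists l' : 'I_p, [&& l' == l.+1 :> nat, l \in e & l' \notin e]]).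
  case/existsP => l /existsP [l' /and3P [/eqP ll' le nl'e]].
  apply: (@detw_col_eq0 _ _ _ l l').
    by apply/eqP => E; move: ll'; rewrite E; lia.
  by rewrite /shift /ordz le (negbTE nl'e) ll' /= addr0 -PoszD addn1.
move/existsPn => nobreak; case/eqP: ne0.
rewrite [LHS]upclosed_ord_set ?ce //.
apply: upclosed_of_succ => l l' ll' le; apply: contraTT (nobreak l) => nl'e.
by rewrite negbK; apply/existsP; exists l'; rewrite ll' eqxx le nl'e.
Qed.

Lemma detw_rcons_row p (rf : 'I_p -> int) r : D (rcons_row rf r) =
  \sum_(b < p.+1) (-1) ^+ (p + b) * w (r + (b : nat)%:Z) * detw rf (cols_skip b).
Proof.
rewrite /detw (expand_det_row _ ord_max); apply: eq_bigr => b _.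
rewrite /cofactor mxE /rcons_row unlift_none /= mulrCA mulrA; congr (_ * \det _).
by apply/matrixP => a j; rewrite !mxE liftK.
Qed.

Lemma detw_skip_last p (rf : 'I_p -> int) : detw rf (cols_skip p) = D rf.
Proof. by apply: eq_detw => a j; rewrite /cols_skip /bump leqNgt ltn_ord. Qed.

Lemma detw_skip_first p (rf : 'I_p -> int) : detw rf (cols_skip 0) = D (fun a => rf a + 1).
Proof. by apply: eq_detw => a j; rewrite /cols_skip /ordz /bump /= PoszD addrA. Qed.

Lemma detw_skip_sum p (rf : 'I_p -> int) b : (b <= p)%N ->
  detw rf (cols_skip b) = \sum_(e : {set 'I_p} | #|e| == (p - b)%N) D (shift rf e).
Proof. by move=> bp; rewrite sum_detw_shift_exchange sum_detw_shift_cols ?leq_subr // subKn. Qed.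

Lemma detw_rcons_row_last p (rf : 'I_p -> int) r : D (rcons_row rf r) =
  w (r + p%:Z) * D rf + \sum_(b < p) (-1) ^+ (p + b) * w (r + (b : nat)%:Z) * detw rf (cols_skip b).
Proof.
rewrite detw_rcons_row big_ord_recr /= detw_skip_last addrC -signr_odd oddD addbb.
by rewrite expr0 mul1r.
Qed.

Lemma detw_rcons_row_first p (rf : 'I_p -> int) r : D (rcons_row rf r) =
  (-1) ^+ p * w r * D (fun a => rf a + 1) +
  \sum_(b < p) (-1) ^+ (p + b.+1) * w (r + b.+1%:Z) * detw rf (cols_skip b.+1).
Proof. by rewrite detw_rcons_row big_ord_recl /= detw_skip_first addn0 addr0. Qed.

End ShiftedDeterminants.

Section ExtLemmas.
Variables (R : comUnitRingType) (g : nat -> R).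

Lemma ext0 : ext g 0 = 1.
Proof. by []. Qed.

Lemma ext_lt0 i : i < 0 -> ext g i = 0.
Proof. by case: i. Qed.

Lemma ext_gt0 k : (0 < k)%N -> ext g k = g k.
Proof. by case: k. Qed.

End ExtLemmas.

Lemma wseqE (R : comUnitRingType) m n (u v : nat -> R) t x :
  wseq m n u v t x = ext u x - t * ext v (n%:Z - m%:Z - x).
Proof. by rewrite /wseq; congr (_ - _ * ext v _); ring. Qed.

(* J = (a 0, ..., a (q-2), e) is stored as (q, a, e), so that a single exponent
   can be updated. *)
Definition seqJ q (a : nat -> int) (e : int) : seq int :=
  if q is q'.+1 then rcons (mkseq a q') e else [::].

Definition adm_exps q (a : nat -> int) := forall k, (k < q.-1)%N -> 0 <= a k.

Definition pad_exps q (a : nat -> int) : nat -> int :=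
  fun i => if i == q.-1 then 0 else a i.

Definition incr_exp (a : nat -> int) k : nat -> int :=
  fun i => if i == k then a k + 1 else a i.

Lemma size_seqJ q a e : size (seqJ q a e) = q.
Proof. by case: q => //= q; rewrite size_rcons size_mkseq. Qed.

Lemma nth_seqJ q a e k : (k < q.-1)%N -> nth 0 (seqJ q a e) k = a k.
Proof. by case: q => //= q kq; rewrite nth_rcons size_mkseq kq nth_mkseq. Qed.

Lemma inX_seqJ m n I q a e :
  sorted (fun a b : int => b < a) I -> (size I <= m)%N ->
  (size I + n = q + m)%N -> adm_exps q a -> inX m n I (seqJ q a e).
Proof.
move=> sorted_I Im Iq ad; split; rewrite ?size_seqJ //; try lia.
by move=> k; rewrite size_seqJ => kq; rewrite nth_seqJ // ad.
Qed.

Lemma adm_pad q a : adm_exps q a -> adm_exps q.+1 (pad_exps q a).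
Proof.
move=> ad k /= kq; rewrite /pad_exps; case: eqP => // kq'.
by apply: ad; case: q kq kq' => [|q] /=; lia.
Qed.

Lemma adm_incr q a k : adm_exps q a -> 0 <= a k -> adm_exps q (incr_exp a k).
Proof.
by move=> ad ak i iq; rewrite /incr_exp; case: eqP => _; [apply: addr_ge0 | apply: ad].
Qed.

Section Spanning.
Variables (m n : nat) (A : comUnitRingType) (u v : nat -> A) (t : A).
Hypothesis t_unit : t \is a GRing.unit.
Hypothesis RI_vanish : forall I : seq int, size I = m.+1 -> RI (wseq m n u v t) I = 0.

Local Notation w := (wseq m n u v t).
Local Notation D rf := (detw w rf (@ordz _)).
Local Notation d := (n%:Z - m%:Z).

Definition umon q (a : nat -> int) (e : int) : A :=
  (\prod_(k < q.-1) u k.+1 ^ a k) * (if q is 0%N then 1 else t ^ e).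

Lemma umon0 a e : umon 0 a e = 1.
Proof. by rewrite /umon big_ord0 mul1r. Qed.

Lemma umon1 a e : umon 1 a e = t ^ e.
Proof. by rewrite /umon big_ord0 mul1r. Qed.

Lemma umon_pad q a e : umon q a e = umon q.+1 (pad_exps q a) (if q is 0%N then 0 else e).
Proof.
case: q => [|q]; first by rewrite umon0 umon1 expr0z.
rewrite /umon /= big_ord_recr /= /pad_exps eqxx expr0z mulr1; congr (_ * _).
by apply: eq_bigr => k _; rewrite ltn_eqF.
Qed.

Lemma umon_mulu q a e k : (k < q.-1)%N -> 0 <= a k ->
  umon q a e * u k.+1 = umon q (incr_exp a k) e.
Proof.
move=> kq ak; rewrite /umon mulrAC; congr (_ * _).
rewrite (bigD1 (Ordinal kq)) //= [RHS](bigD1 (Ordinal kq)) //= /incr_exp eqxx.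
rewrite mulrAC exprzD_ss ?ak // expr1z; congr (_ * _).
by apply: eq_bigr => i /negbTE; rewrite -(inj_eq val_inj) /= => ->.
Qed.

Lemma umon_mult q a e : (0 < q)%N -> umon q a e * t = umon q a (e + 1).
Proof. by case: q => // q _; rewrite /umon -mulrA exprzDr // expr1z. Qed.

Lemma umon_multV q a e : (0 < q)%N -> umon q a e * t^-1 = umon q a (e - 1).
Proof. by case: q => // q _; rewrite /umon -mulrA exprzDr // exprN1. Qed.

Lemma RIJ_seqJ I q a e : RIJ m n u v t I (seqJ q a e) = RI w I * umon q a e.
Proof.
rewrite /RIJ /umon size_seqJ -mulrA; congr (_ * (_ * _)).
  by apply: eq_bigr => k _; rewrite nth_seqJ.
by case: q => //= q; case: (mkseq a q) => [|y s] //=; rewrite last_rcons.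
Qed.

Lemma RIJ_umon I J : RIJ m n u v t I J = RI w I * umon (size J) (nth 0 J) (last 0 J).
Proof. by rewrite /RIJ /umon -mulrA; case: J. Qed.

Definition spanX (x : A) := exists s : seq ((seq int * seq int) * int),
  (forall p, p \in s -> inX m n p.1.1 p.1.2) /\
  x = \sum_(p <- s) (RIJ m n u v t p.1.1 p.1.2) *~ p.2.

Lemma spanX0 : spanX 0.
Proof. by exists [::]; rewrite big_nil. Qed.

Lemma spanXD x y : spanX x -> spanX y -> spanX (x + y).
Proof.
move=> [s [Xs ->]] [s' [Xs' ->]]; exists (s ++ s'); split; last by rewrite big_cat.
by move=> p; rewrite mem_cat => /orP [/Xs|/Xs'].
Qed.

Lemma spanXMz x c : spanX x -> spanX (x *~ c).
Proof.
move=> [s [Xs ->]]; exists [seq (p.1, p.2 * c) | p <- s]; split.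
  by move=> p /mapP [q /Xs Xq ->].
by rewrite big_map mulrz_suml; apply: eq_bigr => p _; rewrite mulrzA.
Qed.

Lemma spanXN x : spanX x -> spanX (- x).
Proof. by move/(spanXMz (-1)); rewrite mulrN1z. Qed.

Lemma spanXB x y : spanX x -> spanX y -> spanX (x - y).
Proof. by move=> Sx /spanXN; apply: spanXD. Qed.

Lemma spanX_sign k x : spanX x -> spanX ((-1) ^+ k * x).
Proof. by rewrite -signr_odd mulr_sign; case: (odd k) => // /spanXN. Qed.

Lemma spanX_sum (I : Type) (r : seq I) (P : pred I) (F : I -> A) :
  (forall i, P i -> spanX (F i)) -> spanX (\sum_(i <- r | P i) F i).
Proof. exact: (big_ind spanX spanX0 spanXD). Qed.

Lemma spanX_RIJ I J : inX m n I J -> spanX (RIJ m n u v t I J).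
Proof.
move=> XIJ; exists [:: ((I, J), 1)]; split; first by move=> p; rewrite inE => /eqP ->.
by rewrite big_seq1.
Qed.

Lemma spanX_detw_umon p q (rf : 'I_p -> int) a e :
  (p + n = q + m)%N -> (p <= m.+1)%N -> adm_exps q a -> spanX (D rf * umon q a e).
Proof.
move=> pq pm ad.
have [-> | [s [sorted_s size_s [k ->]]]] := detw_sort_rows w rf.
  by rewrite mul0r; apply: spanX0.
rewrite -mulrA; apply: spanX_sign.
case: (ltngtP p m.+1) pm => // [ltpm _ | eqpm _]; last first.
  by rewrite RI_vanish ?mul0r ?size_s //; apply: spanX0.
by rewrite -RIJ_seqJ; apply/spanX_RIJ/inX_seqJ; rewrite ?size_s //; lia.
Qed.

Lemma spanX_detw_umon_pad p q (rf : 'I_p.+1 -> int) a e :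
  (p + n = q + m)%N -> (p <= m)%N -> adm_exps q a -> spanX (D rf * umon q a e).
Proof. by move=> pq pm /adm_pad ad; rewrite umon_pad; apply: spanX_detw_umon => //; lia. Qed.

Definition w_spans p q x := forall (rf : 'I_p -> int) a e,
  adm_exps q a -> spanX (w x * (D rf * umon q a e)).

(* For lo q <= x < lo q + p, where p - q = m - n, u_x is 0, 1 or one of
   u_1, ..., u_(q-1), and v_(d-x) is 0, or 1 only when q > 0, so that the
   factor t can be absorbed into the monomial. *)
Local Notation lo q := (d + ((q == 0%N) : nat)%:Z).

Lemma spanX_mulw_window p q x : (p + n = q + m)%N -> (p <= m)%N ->
  lo q <= x < lo q + p%:Z -> w_spans p q x.
Proof.
move=> pq pm /andP [lox xhi] rf a e ad; rewrite wseqE mulrBl; apply: spanXB.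
  case: x => [[|k]|k] in lox xhi *; last by rewrite ext_lt0 // mul0r; apply: spanX0.
    by rewrite ext0 mul1r; apply: spanX_detw_umon => //; lia.
  have kq : (k < q.-1)%N by move: lox xhi; case: eqP => q0; lia.
  rewrite mulrCA [u _ * _]mulrC umon_mulu ?ad //.
  by apply: spanX_detw_umon; [lia | lia | apply: adm_incr => //; apply: ad].
case: (ltgtP (d - x) 0) => dx.
- by rewrite ext_lt0 // mulr0 mul0r; apply: spanX0.
- by move: lox dx; case: eqP => _; lia.
have q0 : (0 < q)%N by move: lox dx; case: eqP => q0; lia.
rewrite dx ext0 mulr1 mulrCA [t * _]mulrC umon_mult //.
by apply: spanX_detw_umon => //; lia.
Qed.

Lemma spanX_expansion_rest p q (F : 'I_p -> int) (G sg : 'I_p -> nat) (rf : 'I_p -> int) a e :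
  (forall b, G b <= p)%N -> (forall b, w_spans p q (F b)) -> adm_exps q a ->
  spanX ((\sum_(b < p) (-1) ^+ sg b * w (F b) * detw w rf (cols_skip (G b))) * umon q a e).
Proof.
move=> Gp spansF ad; rewrite mulr_suml; apply: spanX_sum => b _.
rewrite -!mulrA; apply: spanX_sign.
rewrite detw_skip_sum // mulr_suml mulr_sumr; apply: spanX_sum => E _.
exact: spansF.
Qed.

Lemma spanX_mulw_above p q : (p + n = q + m)%N -> (p <= m)%N ->
  forall k : nat, w_spans p q (lo q + k%:Z).
Proof.
move=> pq pm; elim/ltn_ind => k IH.
have [kp | pk] := ltnP k p; first by apply: spanX_mulw_window => //; lia.
move=> rf a e ad; set r := lo q + k%:Z - p%:Z.
have := detw_rcons_row_last w rf r; rewrite subrK; set S := \sum_(b < p) _ => E.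
have -> : w (lo q + k%:Z) * (D rf * umon q a e) = D (rcons_row rf r) * umon q a e - S * umon q a e.
  by rewrite mulrA -mulrBl E addrK.
apply: spanXB; first exact: spanX_detw_umon_pad.
apply: (spanX_expansion_rest (F := fun b => r + (b : nat)%:Z) (G := fun b => b)) => // b.
  exact: ltnW.
have -> : r + (b : nat)%:Z = lo q + (k - p + b)%N%:Z by rewrite /r; have := ltn_ord b; lia.
by apply: IH; have := ltn_ord b; lia.
Qed.

Lemma spanX_mulw_below p q : (p + n = q + m)%N -> (p <= m)%N ->
  forall k : nat, w_spans p q (lo q + p%:Z - 1 - k%:Z).
Proof.
move=> pq pm; elim/ltn_ind => k IH.
have [kp | pk] := ltnP k p; first by apply: spanX_mulw_window => //; lia.
move=> rf a e ad; set x := lo q + p%:Z - 1 - k%:Z; pose rf' i := rf i - 1.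
have := detw_rcons_row_first w rf' x; set S := \sum_(b < p) _.
rewrite (@eq_detw _ _ _ (fun i => rf' i + 1) _ rf (@ordz p)) => [E|i j]; last by rewrite /rf' subrK.
have -> : w x * (D rf * umon q a e) =
    (-1) ^+ p * (D (rcons_row rf' x) * umon q a e - S * umon q a e).
  by rewrite -mulrBl E addrK !mulrA -expr2 sqrr_sign mul1r.
apply/spanX_sign/spanXB; first exact: spanX_detw_umon_pad.
apply: (spanX_expansion_rest (F := fun b => x + (b.+1 : nat)%:Z) (G := fun b => b.+1)) => // b.
have -> : x + (b.+1 : nat)%:Z = lo q + p%:Z - 1 - (k - b.+1)%N%:Z.
  by rewrite /x; have := ltn_ord b; lia.
by apply: IH; have := ltn_ord b; lia.
Qed.

Lemma spanX_mulw p q x : (p + n = q + m)%N -> (p <= m)%N -> w_spans p q x.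
Proof.
move=> pq pm; have [lox | xlo] := lerP (lo q) x.
  have -> : x = lo q + (absz (x - lo q)%R)%:Z by lia.
  exact: spanX_mulw_above.
have -> : x = lo q + p%:Z - 1 - (absz (lo q + p%:Z - 1 - x)%R)%:Z by lia.
exact: spanX_mulw_below.
Qed.

Lemma detw_rcons_row_d p (rf : 'I_p -> int) : (p + n = m)%N ->
  D (rcons_row rf d) = D rf - (-1) ^+ p * t * D (fun i => rf i + 1).
Proof.
move=> pnm; rewrite detw_rcons_row.
under eq_bigr => b _ do rewrite wseqE mulrBr mulrBl.
rewrite sumrB; congr (_ - _).
  rewrite big_ord_recr /= big1 ?add0r.
    rewrite (_ : d + p%:Z = 0); last by lia.
    by rewrite ext0 mulr1 detw_skip_last -signr_odd oddD addbb mul1r.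
  by move=> b _; rewrite ext_lt0 ?mulr0 ?mul0r //; have := ltn_ord b; lia.
rewrite big_ord_recl /= big1 ?addr0.
  by rewrite detw_skip_first addn0 subrr ext0 mulr1.
by move=> b _; rewrite ext_lt0 ?mulr0 ?mul0r // /bump /=; lia.
Qed.

Definition span_stable g := forall y, spanX y -> spanX (g * y).

Definition basis_stable g := forall p q (rf : 'I_p -> int) a e,
  (p + n = q + m)%N -> (p <= m)%N -> adm_exps q a -> spanX (g * (D rf * umon q a e)).

Lemma basis_stable_span g : basis_stable g -> span_stable g.
Proof.
move=> Bg y [s [Xs ->]]; rewrite mulr_sumr big_seq.
apply: spanX_sum => -[[I J] c] /Xs /= [_ Im Jn admJ IJ].
rewrite mulrzAr RIJ_umon (RI_detw w (erefl (size I))); apply/spanXMz/Bg => //.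
by move: IJ; move: (size I) (size J) => i j; lia.
Qed.

Lemma span_stable0 : span_stable 0.
Proof. by move=> y _; rewrite mul0r; apply: spanX0. Qed.

Lemma span_stable1 : span_stable 1.
Proof. by move=> y; rewrite mul1r. Qed.

Lemma span_stableD g h : span_stable g -> span_stable h -> span_stable (g + h).
Proof. by move=> Sg Sh y Sy; rewrite mulrDl; apply: spanXD; [apply: Sg | apply: Sh]. Qed.

Lemma span_stableB g h : span_stable g -> span_stable h -> span_stable (g - h).
Proof. by move=> Sg Sh y Sy; rewrite mulrBl; apply: spanXB; [apply: Sg | apply: Sh]. Qed.

Lemma span_stableM g h : span_stable g -> span_stable h -> span_stable (g * h).
Proof. by move=> Sg Sh y Sy; rewrite -mulrA; apply/Sg/Sh. Qed.

Lemma span_stable_w x : span_stable (w x).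
Proof. by apply: basis_stable_span => p q rf a e pq pm ad; apply: spanX_mulw. Qed.

Lemma span_stable_t : span_stable t.
Proof.
apply: basis_stable_span => p [|q] rf a e pq pm ad; last first.
  by rewrite mulrCA [t * _]mulrC umon_mult //; apply: spanX_detw_umon => //; lia.
pose rf' i := rf i - 1.
have := @detw_rcons_row_d p rf' ltac:(lia).
rewrite (@eq_detw _ _ _ (fun i => rf' i + 1) _ rf (@ordz p)) => [E|i j]; last by rewrite /rf' subrK.
have -> : t * (D rf * umon 0 a e) =
    (-1) ^+ p * (D rf' * umon 0 a e - D (rcons_row rf' d) * umon 0 a e).
  by rewrite -mulrBl E opprB addrC subrK !mulrA -expr2 sqrr_sign mul1r.
by apply/spanX_sign/spanXB; [apply: spanX_detw_umon | apply: spanX_detw_umon_pad] => //; lia.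
Qed.

Lemma span_stable_tV : span_stable t^-1.
Proof.
apply: basis_stable_span => p [|q] rf a e pq pm ad; last first.
  by rewrite mulrCA [t^-1 * _]mulrC umon_multV //; apply: spanX_detw_umon => //; lia.
have E : D (rcons_row rf d) = D rf - (-1) ^+ p * t * D (fun i => rf i + 1).
  by apply: detw_rcons_row_d; lia.
have -> : t^-1 * (D rf * umon 0 a e) = D (rcons_row rf d) * umon 1 a (-1) +
    (-1) ^+ p * (D (fun i => rf i + 1) * umon 0 a e).
  rewrite umon0 umon1 !mulr1 exprN1 E mulrBl.
  by rewrite [_ * t * _ * t^-1]mulrAC mulrK // subrK mulrC.
by apply/spanXD/spanX_sign; apply: spanX_detw_umon => //; lia.
Qed.

Lemma span_stable_u_lt_d k : (0 < k)%N -> k%:Z < d -> span_stable (u k).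
Proof.
move=> k0 kd; apply: basis_stable_span => p q rf a e pq pm ad.
have kq : (k.-1 < q.-1)%N by lia.
rewrite mulrCA [u k * _]mulrC (_ : k = k.-1.+1); last by lia.
rewrite umon_mulu ?ad //.
by apply: spanX_detw_umon; [lia | lia | apply: adm_incr => //; apply: ad].
Qed.

Lemma span_stable_ext_le0 (g : nat -> A) i : i <= 0 -> span_stable (ext g i).
Proof.
case: i => [[|k]|k] // _; [exact: span_stable1 | exact: span_stable0].
Qed.

Lemma span_stable_ext_u_lt_d i : i < d -> span_stable (ext u i).
Proof.
move=> id; case: (lerP i 0) => [|i0]; first exact: span_stable_ext_le0.
case: i => [k|k] in id i0 *; last by [].
by rewrite ext_gt0; [apply: span_stable_u_lt_d | ]; lia.
Qed.

Lemma span_stable_u k : (0 < k)%N -> span_stable (u k).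
Proof.
move=> k0; have [kd | dk] := ltP (k%:Z) d; first exact: span_stable_u_lt_d.
have -> : u k = w k%:Z + t * ext v (d - k%:Z) by rewrite wseqE ext_gt0 // subrK.
apply/span_stableD/span_stableM; [exact: span_stable_w | exact: span_stable_t |].
by apply: span_stable_ext_le0; lia.
Qed.

Lemma span_stable_v k : (0 < k)%N -> span_stable (v k).
Proof.
move=> k0; have -> : v k = t^-1 * (ext u (d - k%:Z) - w (d - k%:Z)).
  by rewrite wseqE opprB addrC subrK (_ : d - (d - k%:Z) = k) ?ext_gt0 ?mulKr //; ring.
apply/span_stableM/span_stableB; [exact: span_stable_tV | | exact: span_stable_w].
by apply: span_stable_ext_u_lt_d; lia.
Qed.

Lemma spanX1 : spanX 1.
Proof.
have [mn | nm] := leqP m n.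
  have := @spanX_detw_umon 0 (n - m) (fun _ => 0) (fun _ => 0) 0.
  rewrite detw0 mul1r (_ : umon _ _ _ = 1); first by apply; [lia | lia | move=> k _].
  rewrite /umon big1 ?mul1r => [|i _]; last by rewrite expr0z.
  by case: (n - m)%N => //; rewrite expr0z.
have := @spanX_detw_umon (m - n) 0 (fun i => - (i : nat)%:Z) (fun _ => 0) 0.
rewrite umon0 mulr1 (_ : D _ = 1); first by apply; [lia | lia | move=> k _].
rewrite /detw -det_tr det_trig; last first.
  apply/is_trig_mxP => i j ij; rewrite !mxE wseqE /ordz.
  by rewrite ext_lt0 ?(@ext_lt0 _ v) ?mulr0 ?subr0 //; have := ltn_ord j; lia.
apply: big1 => i _; rewrite !mxE addNr wseqE ext0.
by rewrite ext_lt0 ?mulr0 ?subr0 //; lia.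
Qed.

End Spanning.

Theorem mainTheorem16 (m n : nat) (A : comUnitRingType)
    (u v : nat -> A) (t : A) :
  t \is a GRing.unit ->
  (forall I : seq int, size I = m.+1 -> RI (wseq m n u v t) I = 0) ->
  generated_by u v t ->
  forall x : A, exists s : seq ((seq int * seq int) * int),
    (forall p, p \in s -> inX m n p.1.1 p.1.2) /\
    x = \sum_(p <- s) (RIJ m n u v t p.1.1 p.1.2) *~ p.2.
Proof.
move=> t_unit RI_vanish gen x.
have stable_x : span_stable m n u v t x.
  apply: (gen (span_stable m n u v t)) => [|a b|a b|k|k||].
  - exact: span_stable1.
  - exact: span_stableB.
  - exact: span_stableM.
  - exact: span_stable_u.
  - exact: span_stable_v.
  - exact: span_stable_t.
  - exact: span_stable_tV.
by have := stable_x 1 (spanX1 t_unit RI_vanish); rewrite mulr1.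
Qed.
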